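(* Given $f\in\mathcal{N}_{2,\omega}$, we have $f\in\mathcal{N}_{3,\max(\omega,4d)}$ and $$R_3(f;\max(\omega,4d))\le\frac{4d}{3}+\frac43R_2(f;\omega).$$
   Context: Inputs lie in $\mathcal{X}_d=\mathbb{S}^{d-1}\times\mathbb{S}^{d-1}\subset\mathbb{R}^{2d}$. A depth-$L$ ReLU network is $f_{\phi}(\mathbf{x})=\mathbf{w}_L^\top[\mathbf{W}_{L-1}[\cdots[\mathbf{W}_1\mathbf{x}+\mathbf{b}_1]_+\cdots]_++\mathbf{b}_{L-1}]_++b_L$, with $\phi=(\mathbf{W}_1,\mathbf{b}_1,\dots,\mathbf{w}_L,b_L)$; $\mathcal{N}_{L,\omega}$ is the set of such functions with all hidden widths at most $\omega$; $\|\phi\|^2$ is the sum of squares of all weights and biases; $R_L(f;\omega)=\inf\{\|\phi\|^2/L:\ f_\phi=f\text{ on }\mathcal{X}_d,\ \text{all hidden widths}\le\omega\}$. *)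

From HB Require Import structures.
From mathcomp Require Import all_boot all_order all_algebra.
From mathcomp Require Import classical_sets reals.
Unset Printing Implicit Defensive.
Import Order.TTheory GRing.Theory Num.Theory.
Local Open Scope ring_scope.
Local Open Scope classical_set_scope.

Inductive net (R : nzRingType) : nat -> Type :=
| NOut (n : nat) of 'rV[R]_n & R : net R n
| NHid (n m : nat) of 'M[R]_(m, n) & 'cV[R]_m & net R m : net R n.
Arguments NOut {R n}.
Arguments NHid {R n m}.

Definition relu {R : realDomainType} {m : nat} (v : 'cV[R]_m) : 'cV[R]_m :=
  map_mx (fun t => Num.max t 0) v.

Fixpoint neval {R : realDomainType} {n : nat} (N : net R n) : 'cV[R]_n -> R :=
  match N in net _ k return 'cV[R]_k -> R with
  | NOut _ w b => fun x => (w *m x) 0 0 + b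
  | NHid _ _ W b N' => fun x => neval N' (relu (W *m x + b))
  end.

Fixpoint ndepth {R : nzRingType} {n : nat} (N : net R n) : nat :=
  match N with
  | NOut _ _ _ => 1%N
  | NHid _ _ _ _ N' => (ndepth N').+1
  end.

Fixpoint nmaxwidth {R : nzRingType} {n : nat} (N : net R n) : nat :=
  match N with
  | NOut _ _ _ => 0%N
  | NHid _ m _ _ N' => maxn m (nmaxwidth N')
  end.

Fixpoint nsqnorm {R : nzRingType} {n : nat} (N : net R n) : R :=
  match N with
  | NOut _ w b => \sum_j (w 0 j) ^+ 2 + b ^+ 2
  | NHid _ _ W b N' =>
      \sum_i \sum_j (W i j) ^+ 2 + \sum_i (b i 0) ^+ 2 + nsqnorm N'
  end.

(* X_d = S^{d-1} x S^{d-1} inside R^{2d} = R^{d+d} *)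
Definition Xd {R : realDomainType} (d : nat) (x : 'cV[R]_(d + d)) : Prop :=
  \sum_i (usubmx x i 0) ^+ 2 = 1 /\ \sum_i (dsubmx x i 0) ^+ 2 = 1.

Definition realizes {R : realDomainType} (d L w : nat)
  (f : 'cV[R]_(d + d) -> R) (N : net R (d + d)) : Prop :=
  ndepth N = L /\ (nmaxwidth N <= w)%N /\ forall x, Xd d x -> neval N x = f x.

Definition inN {R : realDomainType} (d L w : nat) (f : 'cV[R]_(d + d) -> R) : Prop :=
  exists N, realizes d L w f N.

Definition Rcost {R : realType} (d L w : nat) (f : 'cV[R]_(d + d) -> R) : R :=
  inf [set nsqnorm N / L%:R | N in [set N | realizes d L w f N]].

From HB Require Import structures.
From mathcomp Require Import all_boot all_order all_algebra.
From mathcomp Require Import classical_sets reals.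
From mathcomp Require Import lra zify.
Import Order.TTheory GRing.Theory Num.Theory.
Local Open Scope ring_scope.

(* Since [x]_+ - [-x]_+ = x, the layer x |-> [(I; -I) x]_+ followed by the
   linear map (u; v) |-> u - v is the identity.  Prepend this layer to a
   depth-2 network and fold u - v into its first weight matrix W, which becomes
   [W, -W].  The new layer has width 2(2d) = 4d and costs ||(I; -I)||^2 = 4d,
   while the old first layer costs twice as much as before, so
   ||phi'||^2 <= 4d + 2 ||phi||^2; dividing by 3 gives
   ||phi'||^2 / 3 <= 4d/3 + (4/3) ||phi||^2 / 2. *)

Section Deepening.
Context {R : realType}.

Lemma relu_sub_reluN n (x : 'cV[R]_n) : relu x - relu (- x) = x.
Proof.
apply/matrixP => i j; rewrite !mxE -[X in Num.max (- _) X]oppr0 -oppr_min.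
by rewrite opprK addr_max_min addr0.
Qed.

Definition diff_input {n : nat} (N : net R n) : net R (n + n) :=
  match N in net _ k return net R (k + k) with
  | NOut _ w b => NOut (row_mx w (- w)) b
  | NHid _ _ W b N' => NHid (row_mx W (- W)) b N'
  end.

Lemma neval_diff_input {n} (N : net R n) (u v : 'cV[R]_n) :
  neval (diff_input N) (col_mx u v) = neval N (u - v).
Proof.
by case: N u v => [k w b | k m W b N'] u v /=; rewrite mul_row_col mulNmx mulmxBr.
Qed.

Definition prepend_id {n : nat} (N : net R n) : net R n :=
  NHid (col_mx 1%:M (- 1%:M)) 0 (diff_input N).

Lemma neval_prepend_id {n} (N : net R n) x : neval (prepend_id N) x = neval N x.
Proof.
rewrite /= addr0 mul_col_mx mul1mx mulNmx mul1mx /relu map_col_mx.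
by rewrite neval_diff_input relu_sub_reluN.
Qed.

Lemma ndepth_prepend_id {n} (N : net R n) : ndepth (prepend_id N) = (ndepth N).+1.
Proof. by case: N. Qed.

Lemma nmaxwidth_prepend_id {n} (N : net R n) :
  nmaxwidth (prepend_id N) = maxn (n + n) (nmaxwidth N).
Proof. by case: N. Qed.

Lemma sumr_sqr_ge0 k (F : 'I_k -> R) : 0 <= \sum_i F i ^+ 2.
Proof. by rewrite sumr_ge0 // => i _; rewrite sqr_ge0. Qed.

Lemma nsqnorm_ge0 {n} (N : net R n) : 0 <= nsqnorm N.
Proof.
elim: N => [k w b | k m W b N' IH] /=; first by rewrite addr_ge0 ?sumr_sqr_ge0 ?sqr_ge0.
by rewrite !addr_ge0 ?sumr_sqr_ge0 ?sumr_ge0 // => i _; rewrite sumr_sqr_ge0.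
Qed.

Lemma sum_sqr_row_mx_opp m k (A : 'M[R]_(m, k)) i :
  \sum_(j < k + k) (row_mx A (- A) i j) ^+ 2 = 2 * \sum_j (A i j) ^+ 2.
Proof.
rewrite big_split_ord /=.
under eq_bigr do rewrite row_mxEl.
under [X in _ + X]eq_bigr do rewrite row_mxEr mxE sqrrN.
by rewrite mulrDl mul1r.
Qed.

Lemma nsqnorm_diff_input {n} (N : net R n) :
  nsqnorm (diff_input N) <= 2 * nsqnorm N.
Proof.
case: N => [k w b | k m W b N'] /=.
- rewrite sum_sqr_row_mx_opp.
  have b2_ge0 : 0 <= b ^+ 2 by rewrite sqr_ge0.
  lra.
- under eq_bigr do rewrite sum_sqr_row_mx_opp.
  rewrite -mulr_sumr.
  have := sumr_sqr_ge0 _ (fun i => b i 0); have := nsqnorm_ge0 N'; lra.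
Qed.

Lemma sum_sqr_col_mx_id_opp n :
  \sum_(i < n + n) \sum_(j < n) (col_mx (1%:M : 'M[R]_n) (- 1%:M) i j) ^+ 2
  = (n + n)%:R.
Proof.
have row_id i : \sum_(j < n) ((1%:M : 'M[R]_n) i j) ^+ 2 = 1.
  rewrite (bigD1 i) //= big1 => [|j ji]; first by rewrite mxE eqxx expr1n addr0.
  by rewrite mxE eq_sym (negPf ji) expr0n.
rewrite big_split_ord /=.
under eq_bigr do under eq_bigr do rewrite col_mxEu.
under [X in _ + X]eq_bigr do under eq_bigr do rewrite col_mxEd mxE sqrrN.
by under eq_bigr do rewrite row_id; rewrite sumr_const card_ord natrD.
Qed.

Lemma nsqnorm_prepend_id {n} (N : net R n) :
  nsqnorm (prepend_id N) <= (n + n)%:R + 2 * nsqnorm N.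
Proof.
rewrite /= sum_sqr_col_mx_id_opp big1 => [|i _]; last by rewrite mxE expr0n.
have := nsqnorm_diff_input N; lra.
Qed.

Lemma realizes_prepend_id {d w : nat} {f : 'cV[R]_(d + d) -> R} {N} :
  realizes d 2 w f N -> realizes d 3 (maxn w (4 * d)) f (prepend_id N).
Proof.
move=> [depthN [widthN evalN]]; split; first by rewrite ndepth_prepend_id depthN.
split; last by move=> x Xx; rewrite neval_prepend_id evalN.
rewrite nmaxwidth_prepend_id; have -> : (d + d + (d + d) = 4 * d)%N by lia.
by rewrite geq_max leq_maxr leq_max widthN.
Qed.

Lemma Rcost_le {d L w : nat} {f : 'cV[R]_(d + d) -> R} {N} :
  realizes d L w f N -> Rcost d L w f <= nsqnorm N / L%:R.
Proof.
move=> fN; apply: ge_inf; last by exists N.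
by exists 0 => _ [M _ <-]; rewrite divr_ge0 ?nsqnorm_ge0.
Qed.

Lemma le_Rcost {d L w : nat} {f : 'cV[R]_(d + d) -> R} (a : R) :
  inN d L w f -> (forall N, realizes d L w f N -> a <= nsqnorm N / L%:R) ->
  a <= Rcost d L w f.
Proof.
move=> [N fN] lbN; apply: lb_le_inf => [|_ [M fM <-]]; last exact: lbN.
by exists (nsqnorm N / L%:R), N.
Qed.

End Deepening.

Theorem lemma5 (R : realType) (d w : nat) (f : 'cV[R]_(d + d) -> R) :
  inN d 2 w f ->
  inN d 3 (maxn w (4 * d)) f /\
  Rcost d 3 (maxn w (4 * d)) f <= (4 * d)%:R / 3 + 4 / 3 * Rcost d 2 w f.
Proof.
move=> f2; split.
  by case: f2 => N fN; exists (prepend_id N); exact: realizes_prepend_id.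
suff: (3 * Rcost d 3 (maxn w (4 * d)) f - (4 * d)%:R) / 4 <= Rcost d 2 w f by lra.
apply: le_Rcost => // N fN.
have cost3 := Rcost_le (realizes_prepend_id fN).
have four_d : (d + d + (d + d) = 4 * d)%N by lia.
have := nsqnorm_prepend_id N; rewrite four_d; lra.
Qed.
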